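(* Let $k>2$ be an integer with $k\equiv 2 \pmod 4$ and let $n=\frac{1}{4}k^2-1$. If $\frac{k}{2}$ is not a prime, then any function $f:[n]\to \{-1,1\}$ with $f([n])=0$ admits a $k$-term arithmetic progression $A\subseteq[n]$ with $f(A)=0$.
   Context: $[n]=\{1,\dots,n\}$; $f(Y)=\sum_{y\in Y}f(y)$. *)

From mathcomp Require Import all_boot all_order all_algebra.
Set Implicit Arguments. Unset Strict Implicit. Unset Printing Implicit Defensive.
Import Order.TTheory GRing.Theory Num.Theory.

Definition kAP (k a d : nat) : seq nat := [seq a + i * d | i <- iota 0 k].

(* A is a k-term AP contained in [n] = {1,...,n} (with positive difference,
   so that A has exactly k elements). *)
Definition kAP_in (n k a d : nat) : Prop :=
  (0 < d)%N /\ (1 <= a)%N /\ (a + (k - 1) * d <= n)%N.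

(* Write k = 2m with m = 2h + 1, so that n = m^2 - 1, and let F be the partial sums of f.
   If some block of k consecutive integers has f-sum 0 we are done.  Otherwise the block
   sums are even, nonzero and change by at most 2 from one block to the next, so, after
   replacing f by -f, they are all at least 2.  Chaining blocks upwards from t and
   downwards from n, where F vanishes, pins F(2mj + t) = 2j - t for t < m; hence f is the
   2m-periodic slope that is -1 on m - 1 consecutive points and +1 on the next m + 1.
   Since k/2 = m = pq with p, q > 1, the progression 1, 1 + p, ..., 1 + (2m-1)p fits in
   [n], and ip mod 2m < m exactly when i mod 2q < q, so its f-sum is 0. *)

From mathcomp Require Import all_boot all_order all_algebra zify.
Import Order.TTheory GRing.Theory Num.Theory.

Definition psum (f : nat -> int) (x : nat) : int := (\sum_(1 <= y < x.+1) f y)%R.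

Definition window_sum (f : nat -> int) (L b : nat) : int := (psum f (b + L) - psum f b)%R.

Lemma psum0 f : psum f 0 = 0%R.
Proof. by rewrite /psum big_geq. Qed.

Lemma psumS f x : psum f x.+1 = (psum f x + f x.+1)%R.
Proof. by rewrite /psum big_nat_recr. Qed.

Lemma psumN f x : psum (fun y => - f y)%R x = (- psum f x)%R.
Proof. by rewrite /psum sumrN. Qed.

Lemma window_sumN f L b : window_sum (fun y => - f y)%R L b = (- window_sum f L b)%R.
Proof. by rewrite /window_sum !psumN opprD. Qed.

Lemma sum_kAP (V : nmodType) (F : nat -> V) k a d :
  (\sum_(x <- kAP k a d) F x = \sum_(0 <= i < k) F (a + i * d)%N)%R.
Proof. by rewrite /kAP big_map /index_iota subn0. Qed.

Lemma sum_kAP1 f L b : (\sum_(x <- kAP L b.+1 1) f x)%R = window_sum f L b.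
Proof.
rewrite /kAP big_map /window_sum /psum (big_cat_nat _ (n := b.+1)) //=; last by lia.
rewrite addrC addrK -{2}(add0n b.+1) big_addn subSS addKn /index_iota subn0.
by apply: eq_bigr => i _; rewrite muln1 addnC.
Qed.

Section PlusMinusOne.

Variables (f : nat -> int) (n : nat).
Hypothesis f_pm1 : forall x, x < n -> (f x.+1 = 1 \/ f x.+1 = -1)%R.

Lemma psum_lipschitz x y : x <= y <= n -> (`|psum f y - psum f x| <= (y - x)%:Z)%R.
Proof.
case/andP=> /subnKC <-; elim: (y - x) => [|d IH] le_n; first by rewrite addn0 subrr.
rewrite addnS in le_n *; rewrite psumS.
by have := IH (ltnW le_n); have := f_pm1 _ le_n; lia.
Qed.

Lemma psum_parity x : x <= n -> exists z : int, psum f x = (x%:Z - 2 * z)%R.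
Proof.
elim: x => [|x IH] le_n; first by exists 0%R; rewrite psum0.
rewrite psumS; have [z ->] := IH (ltnW le_n).
by case: (f_pm1 _ le_n) => ->; [exists z | exists (z + 1)%R]; lia.
Qed.

Lemma psum_rise_tight x z y : x <= z < y -> y <= n ->
  psum f y = (psum f x + (y - x)%:Z)%R -> f z.+1 = 1%R.
Proof.
move=> /andP[le_xz lt_zy] le_yn.
have := @psum_lipschitz x z; have := @psum_lipschitz z.+1 y.
by rewrite psumS; have := f_pm1 z; lia.
Qed.

Lemma psum_fall_tight x z y : x <= z < y -> y <= n ->
  psum f y = (psum f x - (y - x)%:Z)%R -> f z.+1 = (-1)%R.
Proof.
move=> /andP[le_xz lt_zy] le_yn.
have := @psum_lipschitz x z; have := @psum_lipschitz z.+1 y.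
by rewrite psumS; have := f_pm1 z; lia.
Qed.

(* Windows of even length have even sums, and neighbouring ones differ by at most 2. *)
Lemma window_sum_ge2 m : (forall b, b + 2 * m <= n -> window_sum f (2 * m) b != 0%R) ->
  (0 < window_sum f (2 * m) 0)%R -> forall b, b + 2 * m <= n -> (2 <= window_sum f (2 * m) b)%R.
Proof.
rewrite /window_sum => nz_window pos_window0.
have even_window b : b + 2 * m <= n -> exists w : int, (psum f (b + 2 * m) - psum f b = 2 * w)%R.
  move=> le_n; have [z1 ->] := psum_parity _ le_n.
  have [z2 ->] := psum_parity _ (leq_trans (leq_addr _ _) le_n).
  by exists (m%:Z - z1 + z2)%R; lia.
elim=> [|b IH] le_n.
  by have [w] := even_window 0 le_n; move: pos_window0; rewrite add0n; lia.
have [w] := even_window _ le_n; have := nz_window _ le_n; have := IH (ltnW le_n).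
by rewrite addSn !psumS; have := f_pm1 b; have := f_pm1 (b + 2 * m); lia.
Qed.

End PlusMinusOne.

Definition sawtooth_slope (m x : nat) : int := if x %% (2 * m) < m - 1 then (-1)%R else 1%R.

Section ForcedSlope.

Variables (f : nat -> int) (n m h : nat).
Hypothesis f_pm1 : forall x, x < n -> (f x.+1 = 1 \/ f x.+1 = -1)%R.
Hypothesis window_ge2 : forall b, b + 2 * m <= n -> (2 <= window_sum f (2 * m) b)%R.
Hypothesis psum_n : psum f n = 0%R.
Hypothesis m_eq : m = 2 * h + 1.
Hypothesis n_eq : n = 2 * m * h + 2 * h.

Lemma psum_chain b i : b + 2 * m * i <= n -> (psum f b + (2 * i)%:Z <= psum f (b + 2 * m * i))%R.
Proof.
elim: i => [|i IH]; first by rewrite !muln0 addn0 addr0.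
rewrite (_ : b + 2 * m * i.+1 = b + 2 * m * i + 2 * m); last by rewrite mulnS; lia.
move=> le_n; have := window_ge2 _ le_n; have := IH (leq_trans (leq_addr _ _) le_n).
by rewrite /window_sum; lia.
Qed.

(* Going up the chain from [t] and down from [n] squeezes [psum] between equal bounds. *)
Lemma psum_sawtooth j t : j <= h -> t <= m - 1 -> psum f (2 * m * j + t) = ((2 * j)%:Z - t%:Z)%R.
Proof.
move=> le_jh le_tm.
have split_h : 2 * m * j + 2 * m * (h - j) = 2 * m * h by rewrite -mulnDr subnKC.
have lower := psum_chain t j; have start := @psum_lipschitz f n f_pm1 0 t.
have upper := psum_chain (2 * m * j + t) (h - j).
have finish := @psum_lipschitz f n f_pm1 (2 * m * h + t) n.
rewrite psum0 psum_n in start finish; rewrite addnC in lower.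
rewrite (_ : 2 * m * j + t + 2 * m * (h - j) = 2 * m * h + t) in upper; last by lia.
lia.
Qed.

Lemma slope_sawtooth x : x < n -> f x.+1 = sawtooth_slope m x.
Proof.
move=> lt_xn; rewrite /sawtooth_slope.
have m_gt0 : 0 < 2 * m by lia.
have x_eq : x = 2 * m * (x %/ (2 * m)) + x %% (2 * m) by rewrite mulnC -divn_eq.
have := ltn_pmod x m_gt0; move: x_eq.
set j := x %/ (2 * m); set t := x %% (2 * m) => x_eq lt_t.
case: ifP => lt_tm.
- have le_jh : j <= h by rewrite -ltnS -(ltn_pmul2l m_gt0); lia.
  have le_jh_m : 2 * m * j <= 2 * m * h by rewrite leq_pmul2l.
  apply: (@psum_fall_tight f n f_pm1 (2 * m * j + 0) x (2 * m * j + (m - 1))); try lia.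
  by rewrite !psum_sawtooth //; lia.
- have lt_jh : j < h by rewrite -(ltn_pmul2l m_gt0); lia.
  have lt_jh_m : 2 * m * j.+1 <= 2 * m * h by rewrite leq_pmul2l.
  apply: (@psum_rise_tight f n f_pm1 (2 * m * j + (m - 1)) x (2 * m * j.+1 + 0)); try lia.
  by rewrite !psum_sawtooth //; lia.
Qed.

End ForcedSlope.

Lemma sum_nat_mod (V : nmodType) (g : nat -> V) L c :
  (\sum_(0 <= i < c * L) g (i %% L)%N = (\sum_(0 <= i < L) g i) *+ c)%R.
Proof.
elim: c => [|c IH]; first by rewrite mul0n big_geq.
rewrite mulSn (big_cat_nat _ (n := L)) ?leq_addr //= mulrS.
rewrite -[X in (_ + \big[_/_]_(X <= _ < _) _)%R]add0n big_addn addKn.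
rewrite (@eq_big_nat _ _ _ 0 L _ g); last by move=> i /andP[_ lt_iL]; rewrite modn_small.
by rewrite -IH; congr (_ + _)%R; apply: eq_bigr => i _; rewrite modnDr.
Qed.

Lemma sawtooth_slope_mul p q i : 1 < p ->
  sawtooth_slope (p * q) (i * p) = if i %% (2 * q) < q then (-1)%R else 1%R.
Proof.
move=> gt1_p; rewrite /sawtooth_slope (_ : 2 * (p * q) = 2 * q * p) -?muln_modl; last by lia.
by congr (if _ then _ else _); apply/idP/idP; nia.
Qed.

Lemma sum_sawtooth_slope_AP p q : 1 < p ->
  (\sum_(0 <= i < 2 * (p * q)) sawtooth_slope (p * q) (i * p) = 0)%R.
Proof.
move=> gt1_p; under eq_bigr do rewrite sawtooth_slope_mul //.
rewrite (_ : 2 * (p * q) = p * (2 * q)); last by lia.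
rewrite (@sum_nat_mod _ (fun j => if j < q then (-1)%R else 1%R)).
rewrite (big_cat_nat _ (n := q)) //=; last by lia.
rewrite (@eq_big_nat _ _ _ 0 q _ (fun=> (-1)%R)) => [|i /andP[_ ->] //].
rewrite (@eq_big_nat _ _ _ q (2 * q) _ (fun=> 1%R)) => [|i /andP[le_qi _]]; last by rewrite ltnNge le_qi.
by rewrite !sumr_const_nat subn0 mul2n -addnn addnK mulNrn addNr mul0rn.
Qed.

Lemma AP_fits_square m p q : m = p * q -> 1 < p -> 1 < q -> (2 * m - 1) * p < m * m - 1.
Proof. by move=> -> gt1_p gt1_q; nia. Qed.

Lemma sum_AP_no_zero_window f n m h p q :
  (forall x, x < n -> (f x.+1 = 1 \/ f x.+1 = -1)%R) -> psum f n = 0%R ->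
  m = 2 * h + 1 -> n = 2 * m * h + 2 * h -> m = p * q -> 1 < p -> 1 < q ->
  (forall b, b + 2 * m <= n -> window_sum f (2 * m) b != 0%R) ->
  (\sum_(0 <= i < 2 * m) f (1 + i * p)%N = 0)%R.
Proof.
move=> f_pm1 psum_n m_eq n_eq m_pq gt1_p gt1_q nz_window.
wlog pos_window0 : f f_pm1 psum_n nz_window / (0 < window_sum f (2 * m) 0)%R => [positive_case|].
  have le_2m_n : 0 + 2 * m <= n by have := leq_mul gt1_p gt1_q; rewrite -m_pq; nia.
  have [neg_window0|pos_window0|zero_window0] := ltrgtP (window_sum f (2 * m) 0) 0.
  - apply/eqP; rewrite -oppr_eq0 -sumrN; apply/eqP.
    apply: (positive_case (fun y => - f y)%R); rewrite ?psumN ?psum_n ?oppr0 ?window_sumN ?oppr_gt0 //.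
      by move=> x /f_pm1 [] ->; rewrite ?opprK; [right | left].
    by move=> b /nz_window; rewrite window_sumN oppr_eq0.
  - exact: positive_case.
  - by have := nz_window 0 le_2m_n; rewrite zero_window0.
have window_ge2 := @window_sum_ge2 f n f_pm1 m nz_window pos_window0.
rewrite m_pq -[RHS](sum_sawtooth_slope_AP p q gt1_p).
apply: eq_big_nat => i /andP[_ lt_i]; rewrite add1n -m_pq.
apply: (@slope_sawtooth f n m h f_pm1 window_ge2 psum_n m_eq n_eq).
have := AP_fits_square m p q m_pq gt1_p gt1_q.
have : i * p <= (2 * m - 1) * p by rewrite leq_mul2r; apply/orP; right; lia.
lia.
Qed.

Local Open Scope ring_scope.

Theorem proposition5p7 (k n : nat) (f : nat -> int) :
  (2 < k)%N -> k = 2 %[mod 4] -> n = (k ^ 2 %/ 4 - 1)%N ->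
  ~~ prime (k %/ 2) ->
  (forall x, (1 <= x <= n)%N -> f x = 1 \/ f x = -1) ->
  \sum_(1 <= x < n.+1) f x = 0 ->
  exists a d, kAP_in n k a d /\ \sum_(x <- kAP k a d) f x = 0.
Proof.
move=> gt2_k k_mod4 n_def not_prime f_pm1 psum_n.
set m := (k %/ 2)%N in not_prime; set h := (m %/ 2)%N.
have k_eq : k = (2 * m)%N by move: k_mod4 => /=; lia.
have m_eq : m = (2 * h + 1)%N by move: k_mod4 => /=; lia.
have n_sq : n = (m * m - 1)%N by rewrite n_def k_eq expnMn mulKn.
have n_eq : n = (2 * m * h + 2 * h)%N by rewrite n_sq m_eq; nia.
have [p [q [m_pq gt1_p gt1_q]]] : exists p q, [/\ m = (p * q)%N, (1 < p)%N & (1 < q)%N].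
  have /primePn[|[p /andP[gt1_p lt_pm] /dvdnP[q m_qp]]] := not_prime; first by lia.
  by exists p, q; split=> //; [rewrite mulnC | nia].
have f_pm1S x : (x < n)%N -> f x.+1 = 1 \/ f x.+1 = -1 by move=> lt_xn; apply: f_pm1.
case: (boolP [exists b : 'I_n.+1, (b + k <= n)%N && (window_sum f k b == 0)]).
  case/existsP=> b /andP[le_bn /eqP zero_window].
  by exists b.+1, 1%N; split; [rewrite /kAP_in; lia | rewrite sum_kAP1].
move/existsPn=> nz_window; exists 1%N, p; split.
  by rewrite /kAP_in; have := AP_fits_square m p q m_pq gt1_p gt1_q; lia.
rewrite sum_kAP k_eq.
apply: (@sum_AP_no_zero_window f n m h p q f_pm1S psum_n m_eq n_eq m_pq gt1_p gt1_q).
move=> b le_bn; have lt_bn : (b < n.+1)%N by lia.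
by have := nz_window (Ordinal lt_bn); rewrite k_eq le_bn.
Qed.
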